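(* Assume (A1) and (A2) below. Then for any $s\in\mathcal S$ and policy $\pi$, $$\mathbb{E}_{p\sim\Phi_t}\Big[\mathbb{V}_{a,s'\sim\pi,p}\big[V^{\pi,p}(s')\big]-\mathbb{V}_{a,s'\sim\pi,p}\big[\bar V^\pi_t(s')\big]\Big]\ge 0.$$
   Context: Let $\mathcal S$ be a finite state space, $\mathcal A$ a finite action space, $r:\mathcal S\times\mathcal A\to\mathbb R$ a known bounded (deterministic) reward function and $\gamma\in[0,1)$ a discount factor. A transition function $p$ assigns to each $(s,a)$ a probability distribution $p(\cdot\mid s,a)$ on $\mathcal S$. A policy $\pi$ gives distributions $\pi(\cdot\mid s)$ on $\mathcal A$. For a transition function $p$, the value function is $V^{\pi,p}(s)=\mathbb E\big[\sum_{h\ge 0}\gamma^h r(s_h,a_h)\mid s_0=s\big]$ with $a_h\sim\pi(\cdot\mid s_h)$, $s_{h+1}\sim p(\cdot\mid s_h,a_h)$. The transition function $p$ is a random variable with distribution $\Phi_t$, and $\bar V^\pi_t(s)=\mathbb E_{p\sim\Phi_t}[V^{\pi,p}(s)]$. For a transition function $q$ and a function $f$ on $\mathcal S$, $\mathbb V_{a,s'\sim\pi,q}[f(s')]$ denotes the variance of $f(s')$ when $a\sim\pi(\cdot\mid s)$ and $s'\sim q(\cdot\mid s,a)$. Assumptions: (A1) (independent transitions) $p(s'\mid x,a)$ and $p(s'\mid y,a)$ are independent random variables if $x\neq y$; (A2) (acyclic MDP) the MDP is a directed acyclic graph, i.e., states are not visited more than once in any given episode. *)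

From HB Require Import structures.
From mathcomp Require Import all_boot all_order all_algebra.
From mathcomp Require Import all_classical all_reals all_analysis.
Set Implicit Arguments. Unset Strict Implicit. Unset Printing Implicit Defensive.
Import Order.TTheory GRing.Theory Num.Theory.
Local Open Scope classical_set_scope.
Local Open Scope ring_scope.

Section MDP.
Variables (R : realType) (S A : finType).

(* A transition function: q s a s' = q(s' | s, a). *)
Definition trans := S -> A -> S -> R.
(* A policy: pol s a = pi(a | s). *)
Definition policy := S -> A -> R.

Definition is_trans (q : trans) : Prop :=
  forall s a, (forall s', 0 <= q s a s') /\ \sum_(s' : S) q s a s' = 1.

Definition is_policy (pol : policy) : Prop :=
  forall s, (forall a, 0 <= pol s a) /\ \sum_(a : A) pol s a = 1.

Fixpoint state_dist (q : trans) (pol : policy) (s : S) (h : nat) : S -> R :=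
  match h with
  | 0 => fun x => if x == s then 1 else 0
  | h'.+1 => fun y =>
      \sum_(x : S) state_dist q pol s h' x * \sum_(a : A) pol x a * q x a y
  end.

Definition exp_reward (r : S -> A -> R) (q : trans) (pol : policy) (s : S)
  (h : nat) : R :=
  \sum_(x : S) state_dist q pol s h x * \sum_(a : A) pol x a * r x a.

Definition value (r : S -> A -> R) (gamma : R) (q : trans) (pol : policy)
  (s : S) : R :=
  limn (fun n => \sum_(0 <= h < n) gamma ^+ h * exp_reward r q pol s h).

Definition var_next (q : trans) (pol : policy) (s : S) (f : S -> R) : R :=
  let m := \sum_(a : A) \sum_(s' : S) pol s a * q s a s' * f s' in
  \sum_(a : A) \sum_(s' : S) pol s a * q s a s' * (f s' - m) ^+ 2.

End MDP.

Section Random.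
Variables (R : realType) (S A : finType) (d : measure_display)
  (Omega : measurableType d) (P : probability Omega R).

(* the random transition function p : Omega -> trans, distributed as Phi_t *)
Definition random_trans (p : Omega -> trans R S A) : Prop :=
  (forall w, is_trans (p w)) /\
  (forall x a y, measurable_fun setT (fun w => p w x a y)).

Definition expect (X : Omega -> R) : R := fine (\int[P]_w (X w)%:E).

(* (A1): the random rows p(. | x, .), x in S, are mutually independent:
   product rule for every family of Borel "rectangle" events. *)
Definition indep_rows (p : Omega -> trans R S A) : Prop :=
  forall B : S -> A -> S -> set R,
    (forall x a y, measurable (B x a y)) ->
    fine (P [set w | forall x a y, B x a y (p w x a y)]) =
    \prod_(x : S) fine (P [set w | forall a y, B x a y (p w x a y)]).

(* (A2): acyclic MDP: a fixed DAG (rank strictly increases along every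
   possible transition), terminal states being modelled as absorbing. *)
Definition acyclic (p : Omega -> trans R S A) : Prop :=
  exists rank : S -> nat,
    forall w x a y, 0 < p w x a y ->
      (rank x < rank y)%N \/ (forall w' a', p w' x a' x = 1).

End Random.

From HB Require Import structures.
From mathcomp Require Import all_boot all_order all_algebra.
From mathcomp Require Import all_classical all_reals all_analysis.
From mathcomp Require Import measurable_realfun ring.
Set Implicit Arguments. Unset Strict Implicit. Unset Printing Implicit Defensive.
Import Order.TTheory GRing.Theory Num.Theory.
Local Open Scope classical_set_scope.
Local Open Scope ring_scope.

(* Freeze the row of [s] into a self-loop.  By acyclicity this does not change
   the value of any state that [s] can reach in one step, so on the support of
   the next-state distribution [V^{pi,p}] may be replaced by the frozen value
   [V'], which is a function of the other rows only and hence, by (A1),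
   independent of the row of [s]; likewise [Vbar] may be replaced by [E V'].
   Writing [V' = E V' + D], the variance of [V'] is
   [Var D + Var (E V') + 2 Cov (D, E V')], and the covariance is a sum of
   products of functions of the row of [s] with the centred [D], whose
   expectation vanishes by independence.  What is left is [E (Var D) >= 0]. *)

Section Bounded.
Context (R : realType) (T : Type).
Implicit Types X Y : T -> R.

Definition bounded X := exists M : R, forall w, `|X w| <= M.

Lemma bounded_cst c : bounded (fun _ => c).
Proof. by exists `|c|. Qed.

Lemma boundedD X Y : bounded X -> bounded Y -> bounded (fun w => X w + Y w).
Proof.
move=> [M hM] [N hN]; exists (M + N) => w.
exact: le_trans (ler_normD _ _) (lerD (hM w) (hN w)).
Qed.

Lemma boundedN X : bounded X -> bounded (fun w => - X w).
Proof. by move=> [M hM]; exists M => w; rewrite normrN. Qed.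

Lemma boundedB X Y : bounded X -> bounded Y -> bounded (fun w => X w - Y w).
Proof. by move=> bX bY; apply: boundedD => //; exact: boundedN. Qed.

Lemma boundedM X Y : bounded X -> bounded Y -> bounded (fun w => X w * Y w).
Proof. by move=> [M hM] [N hN]; exists (M * N) => w; rewrite normrM ler_pM. Qed.

Lemma bounded_sum (I : Type) (r : seq I) (F : I -> T -> R) :
  (forall i, bounded (F i)) -> bounded (fun w => \sum_(i <- r) F i w).
Proof.
move=> bF; elim: r => [|i r IH].
  by exists 0 => w; rewrite big_nil normr0.
under eq_fun do rewrite big_cons.
exact: boundedD.
Qed.

End Bounded.

Section BoundedRandomVariable.
Context (R : realType) (d : measure_display) (Omega : measurableType d).
Implicit Types X Y : Omega -> R.

Definition bounded_rv X := measurable_fun setT X /\ bounded X.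

Lemma bounded_rv_cst c : bounded_rv (fun _ => c).
Proof. by split; [exact: measurable_cst | exact: bounded_cst]. Qed.

Lemma bounded_rvD X Y : bounded_rv X -> bounded_rv Y ->
  bounded_rv (fun w => X w + Y w).
Proof. by move=> [mX bX] [mY bY]; split; [exact: measurable_funD | exact: boundedD]. Qed.

Lemma bounded_rvB X Y : bounded_rv X -> bounded_rv Y ->
  bounded_rv (fun w => X w - Y w).
Proof. by move=> [mX bX] [mY bY]; split; [exact: measurable_funB | exact: boundedB]. Qed.

Lemma bounded_rvM X Y : bounded_rv X -> bounded_rv Y ->
  bounded_rv (fun w => X w * Y w).
Proof. by move=> [mX bX] [mY bY]; split; [exact: measurable_funM | exact: boundedM]. Qed.

Lemma bounded_rv_sum (I : Type) (r : seq I) (F : I -> Omega -> R) :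
  (forall i, bounded_rv (F i)) -> bounded_rv (fun w => \sum_(i <- r) F i w).
Proof.
move=> hF; split; last by apply: bounded_sum => i; case: (hF i).
by apply: measurable_sum => i; case: (hF i).
Qed.

End BoundedRandomVariable.
Arguments bounded_rv_cst {R d Omega} c.

Section Expectation.
Context (R : realType) (d : measure_display) (Omega : measurableType d)
  (P : probability Omega R).
Implicit Types X Y : Omega -> R.
Local Notation E := (expect P).

Lemma bounded_rv_integrable X : bounded_rv X -> P.-integrable setT (EFin \o X).
Proof.
move=> [mX [M hM]]; apply: measurable_bounded_integrable => //.
  exact: le_lt_trans (probability_le1 P measurableT) (ltry 1).
exists M; split; first by rewrite num_real.
by move=> N MN w _; exact: le_trans (hM w) (ltW MN).
Qed.

Lemma integral_expect X : bounded_rv X -> (\int[P]_w (X w)%:E)%E = (E X)%:E.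
Proof. by move=> bX; rewrite fineK // integrable_fin_num // bounded_rv_integrable. Qed.

Lemma expect_cst c : E (fun _ => c) = c.
Proof.
rewrite [LHS](Rintegral_cst P measurableT c) -[RHS]mulr1 -[1]/(fine 1%E).
by congr (_ * fine _); exact: probability_setT.
Qed.

Lemma expectD X Y : bounded_rv X -> bounded_rv Y ->
  E (fun w => X w + Y w) = E X + E Y.
Proof.
by move=> bX bY; exact: RintegralD measurableT
  (bounded_rv_integrable bX) (bounded_rv_integrable bY).
Qed.

Lemma expectB X Y : bounded_rv X -> bounded_rv Y ->
  E (fun w => X w - Y w) = E X - E Y.
Proof.
by move=> bX bY; exact: RintegralB measurableT
  (bounded_rv_integrable bX) (bounded_rv_integrable bY).
Qed.

Lemma expectZ c X : bounded_rv X -> E (fun w => c * X w) = c * E X.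
Proof. by move=> bX; exact: RintegralZl measurableT (bounded_rv_integrable bX). Qed.

Lemma expect_sum (I : Type) (r : seq I) (F : I -> Omega -> R) :
  (forall i, bounded_rv (F i)) ->
  E (fun w => \sum_(i <- r) F i w) = \sum_(i <- r) E (F i).
Proof.
move=> hF; elim: r => [|i r IH].
  by under eq_fun do rewrite big_nil; rewrite big_nil expect_cst.
under eq_fun do rewrite big_cons.
by rewrite big_cons expectD ?IH //; exact: bounded_rv_sum.
Qed.

Lemma expect_ge0 X : (forall w, 0 <= X w) -> 0 <= E X.
Proof. by move=> X0; apply: Rintegral_ge0 => w _. Qed.

End Expectation.

Section IndependentEvents.
Context (R : realType) (d : measure_display) (Omega : measurableType d)
  (P : probability Omega R).
Local Open Scope ereal_scope.

Definition indep_events (A B : set Omega) := P (A `&` B) = P A * P B.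

Lemma indep_events_sym A B : indep_events A B -> indep_events B A.
Proof. by rewrite /indep_events setIC muleC. Qed.

Lemma probability_fineE (A : set Omega) : measurable A -> P A = (fine (P A))%:E.
Proof. by move=> mA; rewrite fineK // fin_num_measure. Qed.

Lemma indep_eventsC A B : measurable A -> measurable B ->
  indep_events A B -> indep_events (~` A) B.
Proof.
move=> mA mB hAB.
rewrite /indep_events probability_setC // setIC -setDE measureD //; last first.
  by rewrite (le_lt_trans (probability_le1 _ _)) ?ltry.
transitivity (P B - P A * P B); first by congr (_ - _); rewrite setIC; exact: hAB.
rewrite (probability_fineE mA) (probability_fineE mB).
by rewrite -EFinM -EFinB -EFinB -EFinM; congr EFin; ring.
Qed.

Lemma indep_events_bigcup (F : (set Omega)^nat) B :
  (forall n, measurable (F n)) -> measurable B -> trivIset setT F ->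
  (forall n, indep_events (F n) B) -> indep_events (\bigcup_n F n) B.
Proof.
move=> mF mB tF; rewrite /indep_events setI_bigcupl => hF.
rewrite measure_bigcup //=; last 2 first.
- by move=> n _; exact: measurableI.
- exact: trivIset_setIr.
rewrite measure_bigcup //=.
under eq_eseriesr do rewrite hF.
rewrite (probability_fineE mB); under eq_eseriesr do rewrite muleC.
rewrite nneseriesZl; first by rewrite muleC.
by move=> n _; exact: measure_ge0.
Qed.

Lemma sigma_sub_measurable (G : set (set Omega)) :
  G `<=` measurable -> <<s G>> `<=` measurable.
Proof. by move=> GM; apply: smallest_sub => //; exact: sigma_algebra_measurable. Qed.

Lemma measurable_fun_sigma (G : set (set Omega)) (f : Omega -> R) :
  G `<=` measurable ->
  measurable_fun [set: g_sigma_algebraType G] (f : g_sigma_algebraType G -> R) ->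
  measurable_fun [set: Omega] f.
Proof. by move=> GM mf _ B mB; apply: sigma_sub_measurable GM _ _; exact: mf. Qed.

Lemma indep_events_sigmal (G : set (set Omega)) B :
  setI_closed G -> G `<=` measurable -> measurable B ->
  (forall A, G A -> indep_events A B) ->
  forall A, <<s G>> A -> indep_events A B.
Proof.
move=> GI GM mB GB.
have GsM := sigma_sub_measurable GM.
apply: (@dynkin_induction _ (g_sigma_algebraType G) G
  (fun A => indep_events A B) erefl GI) => //.
- by rewrite /indep_events setTI probability_setT mul1e.
- by move=> A GA hA; apply: indep_eventsC => //; exact: GsM _ GA.
- by move=> F GF tF hF; apply: indep_events_bigcup => // n; exact: GsM _ (GF n).
Qed.

Lemma indep_events_sigma (G1 G2 : set (set Omega)) :
  setI_closed G1 -> setI_closed G2 -> G1 `<=` measurable -> G2 `<=` measurable ->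
  (forall A B, G1 A -> G2 B -> indep_events A B) ->
  forall A B, <<s G1>> A -> <<s G2>> B -> indep_events A B.
Proof.
move=> G1I G2I G1M G2M G12 A B G1A G2B.
have sigma1_G2 C : G2 C -> forall A, <<s G1>> A -> indep_events A C.
  by move=> G2C; apply: indep_events_sigmal => // [|A' G1A']; [exact: G2M | exact: G12].
apply/indep_events_sym/(indep_events_sigmal G2I G2M) => // [|C G2C].
  exact: sigma_sub_measurable G1M _ G1A.
exact/indep_events_sym/sigma1_G2.
Qed.

End IndependentEvents.

Section ProductRule.
Context (R : realType) (d : measure_display) (Omega : measurableType d)
  (P : probability Omega R).
Local Open Scope ereal_scope.
Import HBNNSimple.

Section SubSigma.
Variables (G : set (set Omega)) (GM : G `<=` measurable).

Lemma integral_nnsfun_mul (g : Omega -> R) (c : R)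
    (h : {nnsfun g_sigma_algebraType G >-> R}) :
  measurable_fun [set: Omega] g -> (forall w, (0 <= g w)%R) ->
  (forall B, <<s G>> B -> \int[P]_(w in B) (g w)%:E = P B * c%:E) ->
  \int[P]_w ((h w)%:E * (g w)%:E) =
  (\sum_(y \in range h) y%:E * P (h @^-1` [set y])) * c%:E.
Proof.
move=> mg g_ge0 integral_g.
have mh : measurable_fun [set: Omega] (h : Omega -> R).
  exact: measurable_fun_sigma GM (measurable_funP h).
have Gh y : <<s G>> (h @^-1` [set y]).
  by have := measurable_funP h measurableT _ (measurable_set1 y); rewrite setTI.
have mhy y : measurable (h @^-1` [set y] : set Omega).
  exact: sigma_sub_measurable GM _ (Gh y).
transitivity (\int[P]_w (\sum_(y \in range h)
    (y * \1_(h @^-1` [set y]) w)%:E * (g w)%:E)).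
  apply: eq_integral => w _.
  rewrite -ge0_mule_fsuml => [|y]; last exact: nnfun_muleindic_ge0.
  by rewrite fsumEFin // {1}(fimfunE h w).
rewrite ge0_integral_fsum //; last 2 first.
- move=> y; apply: emeasurable_funM; apply/measurable_EFinP => //.
  by apply: measurable_funM => //; exact: measurable_indic.
- move=> y w _; apply: mule_ge0; last by rewrite lee_fin.
  by rewrite EFinM nnfun_muleindic_ge0.
rewrite ge0_mule_fsuml; last first.
  move=> y; have [y0|y0] := ltP y 0%R.
    by rewrite preimage_nnfun0 // measure0 mule0.
  by rewrite mule_ge0.
apply: eq_fsbigr => y yh.
have y0 : (0 <= y)%R by move: yh; rewrite inE => -[w _ <-]; exact: fun_ge0.
under eq_integral do rewrite EFinM -muleA.
rewrite ge0_integralZl //; last 2 first.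
- apply: emeasurable_funM; apply/measurable_EFinP => //; exact: measurable_indic.
- by move=> w _; rewrite mule_ge0 // lee_fin.
rewrite -muleA -integral_g // [in RHS]integral_mkcond; congr (_ * _).
by apply: eq_integral => w _; rewrite epatch_indic /= muleC.
Qed.

(* Approximate [f] from below by [<<s G>>]-simple functions, for which the
   identity is [integral_nnsfun_mul] applied to [g] and to the constant [1]. *)
Lemma integral_mul_sigma (g : Omega -> R) (c : R) (f : Omega -> R) :
  measurable_fun [set: Omega] g -> (forall w, (0 <= g w)%R) ->
  (forall B, <<s G>> B -> \int[P]_(w in B) (g w)%:E = P B * c%:E) ->
  measurable_fun [set: g_sigma_algebraType G] (f : g_sigma_algebraType G -> R) ->
  (forall w, (0 <= f w)%R) ->
  \int[P]_w ((f w)%:E * (g w)%:E) = (\int[P]_w (f w)%:E) * c%:E.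
Proof.
move=> mg g_ge0 integral_g mf f0.
have mfE : measurable_fun [set: g_sigma_algebraType G]
    (EFin \o f : g_sigma_algebraType G -> \bar R) by exact/measurable_EFinP.
pose h := nnsfun_approx measurableT mfE.
have h_cvg w : (EFin \o h ^~ w) @ \oo --> (f w)%:E.
  by apply: cvg_nnsfun_approx => // x _; rewrite lee_fin.
have mh n : measurable_fun [set: Omega] (h n : Omega -> R).
  exact: measurable_fun_sigma GM (measurable_funP (h n)).
have h_nd w : {homo (h ^~ w) : m n / (m <= n)%N >-> (m <= n)%R}.
  by move=> m n mn; exact/lefP/nd_nnsfun_approx.
have integral_h n : \int[P]_w ((h n w)%:E * (g w)%:E) =
    (\int[P]_w (h n w)%:E) * c%:E.
  rewrite (integral_nnsfun_mul _ mg g_ge0 integral_g); congr (_ * _).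
  transitivity (\int[P]_w ((h n w)%:E * (cst 1%R w)%:E)); last first.
    by apply: eq_integral => w _; rewrite mule1.
  rewrite (@integral_nnsfun_mul (cst 1%R) 1%R (h n)) ?mule1 // => B GB.
  have mB := sigma_sub_measurable GM GB.
  by rewrite mule1 -[P B]mul1e -integral_cst.
have cvg_int_h : (\int[P]_w (h n w)%:E) @[n --> \oo] --> \int[P]_w (f w)%:E.
  have -> : \int[P]_w (f w)%:E = \int[P]_w (limn (EFin \o h ^~ w)).
    by apply: eq_integral => w _; apply/esym/cvg_lim => //; exact: h_cvg.
  apply: (@cvg_monotone_convergence _ _ _ P _ measurableT (fun n w => (h n w)%:E)).
  - by move=> n; exact/measurable_EFinP.
  - by move=> n w _; rewrite lee_fin.
  - by move=> w _ m n mn; rewrite lee_fin; exact: h_nd.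
have -> : \int[P]_w ((f w)%:E * (g w)%:E) =
    limn (fun n => \int[P]_w ((h n w)%:E * (g w)%:E)).
  rewrite -monotone_convergence //.
  - apply: eq_integral => w _; apply/esym/cvg_lim => //.
    by apply: cvgeZr => //; exact: h_cvg.
  - by move=> n; apply: emeasurable_funM; exact/measurable_EFinP.
  - by move=> n w _; rewrite mule_ge0 // lee_fin.
  - by move=> w _ m n mn; rewrite lee_wpmul2r ?lee_fin //; exact: h_nd.
under eq_fun do rewrite integral_h.
by apply/cvg_lim => //; exact: cvgeZr.
Qed.

End SubSigma.

Section IndependentSigma.
Variables (G1 G2 : set (set Omega)).
Hypotheses (G1I : setI_closed G1) (G2I : setI_closed G2).
Hypotheses (G1M : G1 `<=` measurable) (G2M : G2 `<=` measurable).
Hypothesis G12 : forall A B, G1 A -> G2 B -> indep_events P A B.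

Local Notation T1 := (g_sigma_algebraType G1).
Local Notation T2 := (g_sigma_algebraType G2).

Lemma integral_mul_indep (f g : Omega -> R) :
  measurable_fun [set: T1] (f : T1 -> R) -> (forall w, (0 <= f w)%R) ->
  measurable_fun [set: T2] (g : T2 -> R) -> (forall w, (0 <= g w)%R) ->
  P.-integrable setT (EFin \o g) ->
  \int[P]_w ((f w)%:E * (g w)%:E) = (\int[P]_w (f w)%:E) * (\int[P]_w (g w)%:E).
Proof.
move=> mf f0 mg g0 ig.
have intgE : \int[P]_w (g w)%:E = (fine (\int[P]_w (g w)%:E))%:E.
  by rewrite fineK // integrable_fin_num.
rewrite intgE; apply: (integral_mul_sigma G1M) f0 => //.
  exact: measurable_fun_sigma G2M mg.
move=> B G1B; have mB := sigma_sub_measurable G1M G1B.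
rewrite -intgE integral_mkcond.
under eq_integral do rewrite epatch_indic.
have indic_ge0 w : (0 <= \1_B w :> R)%R by rewrite indicE.
rewrite (@integral_mul_sigma G2 G2M _ (fine (P B))) //.
- by rewrite -probability_fineE // muleC.
- move=> C G2C; rewrite integral_indic //; last exact: sigma_sub_measurable G2M _ G2C.
  rewrite -probability_fineE // muleC.
  exact: indep_events_sigma G1I G2I G1M G2M G12 _ _ G1B G2C.
Qed.

Local Close Scope ereal_scope.

(* Shifting [f] and [g] by their bounds reduces to the nonnegative case. *)
Lemma expect_mul_indep (f g : Omega -> R) :
  measurable_fun [set: T1] (f : T1 -> R) -> bounded f ->
  measurable_fun [set: T2] (g : T2 -> R) -> bounded g ->
  expect P (fun w => f w * g w) = expect P f * expect P g.
Proof.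
move=> mf [K hK] mg [M hM].
have bf : bounded_rv f by split; [exact: measurable_fun_sigma G1M mf | exists K].
have bg : bounded_rv g by split; [exact: measurable_fun_sigma G2M mg | exists M].
have bfg := bounded_rvM bf bg.
have bfK : bounded_rv (fun w => f w + K).
  by apply: bounded_rvD => //; exact: bounded_rv_cst.
have bgM : bounded_rv (fun w => g w + M).
  by apply: bounded_rvD => //; exact: bounded_rv_cst.
have shift_ge0 (X : Omega -> R) (L : R) :
    (forall w, `|X w| <= L) -> forall w, 0 <= X w + L.
  by move=> hL w; rewrite -lerBlDr sub0r; have := hL w; rewrite ler_norml => /andP[].
have prod : expect P (fun w => (f w + K) * (g w + M)) =
    expect P (fun w => f w + K) * expect P (fun w => g w + M).
  apply: EFin_inj; rewrite EFinM -(integral_expect P bfK) -(integral_expect P bgM).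
  rewrite -(integral_expect P (bounded_rvM bfK bgM)).
  apply: integral_mul_indep; [| exact: shift_ge0 | | exact: shift_ge0 |].
  - by apply: measurable_funD => //; exact: measurable_cst.
  - by apply: measurable_funD => //; exact: measurable_cst.
  - exact: bounded_rv_integrable.
have expand : expect P (fun w => (f w + K) * (g w + M)) =
    expect P (fun w => f w * g w) + M * expect P f + K * expect P g + K * M.
  transitivity (expect P (fun w => f w * g w + M * f w + (K * g w + K * M))).
    by congr expect; apply/funext => w; ring.
  have bMf : bounded_rv (fun w => M * f w).
    by apply: bounded_rvM => //; exact: bounded_rv_cst.
  have bKg : bounded_rv (fun w => K * g w).
    by apply: bounded_rvM => //; exact: bounded_rv_cst.
  rewrite (expectD P (bounded_rvD bfg bMf) (bounded_rvD bKg (bounded_rv_cst _))).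
  rewrite (expectD P bfg bMf) (expectD P bKg (bounded_rv_cst _)).
  by rewrite (expectZ P M bf) (expectZ P K bg) expect_cst addrA.
move: prod; rewrite expand (expectD P bf (bounded_rv_cst K)).
rewrite (expectD P bg (bounded_rv_cst M)) !expect_cst => prod.
by apply: (addIr (M * expect P f + K * expect P g + K * M)); rewrite !addrA prod; ring.
Qed.

End IndependentSigma.

End ProductRule.

Section Value.
Context (R : realType) (S A : finType) (q : trans R S A) (pol : policy R S A).
Hypotheses (hq : is_trans q) (hpol : is_policy pol).
Implicit Types (r : S -> A -> R) (gamma : R).

Lemma state_dist_ge0 i h x : 0 <= state_dist q pol i h x.
Proof.
elim: h x => [|h IH] x /=; first by case: ifP.
apply: sumr_ge0 => y _; apply: mulr_ge0 => //; apply: sumr_ge0 => a _.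
by apply: mulr_ge0; [exact: (hpol y).1 | exact: (hq y a).1].
Qed.

Lemma state_dist_sum1 i h : \sum_x state_dist q pol i h x = 1.
Proof.
elim: h => [|h IH] /=.
  by rewrite (bigD1 i) //= eqxx big1 ?addr0 // => x /negbTE ->.
rewrite exchange_big /= -[RHS]IH; apply: eq_bigr => x _.
rewrite -mulr_sumr exchange_big /=.
under eq_bigr do rewrite -mulr_sumr (hq _ _).2 mulr1.
by rewrite (hpol x).2 mulr1.
Qed.

Lemma state_dist_le1 i h x : state_dist q pol i h x <= 1.
Proof.
rewrite -(state_dist_sum1 i h) (bigD1 x) //= lerDl.
by apply: sumr_ge0 => y _; exact: state_dist_ge0.
Qed.

Lemma policy_le1 x a : pol x a <= 1.
Proof.
rewrite -(hpol x).2 (bigD1 a) //= lerDl.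
by apply: sumr_ge0 => b _; exact: (hpol x).1.
Qed.

Lemma trans_le1 x a y : q x a y <= 1.
Proof.
rewrite -(hq x a).2 (bigD1 y) //= lerDl.
by apply: sumr_ge0 => z _; exact: (hq x a).1.
Qed.

Definition reward_bound r := \sum_x \sum_a `|r x a|.

Lemma reward_bound_ge0 r : 0 <= reward_bound r.
Proof. by apply: sumr_ge0 => x _; apply: sumr_ge0. Qed.

Lemma exp_reward_bound r i h : `|exp_reward r q pol i h| <= reward_bound r.
Proof.
apply: le_trans (ler_norm_sum _ _ _) _; apply: ler_sum => x _.
rewrite normrM (ger0_norm (state_dist_ge0 _ _ _)).
apply: le_trans (ler_wpM2r (normr_ge0 _) (state_dist_le1 i h x)) _; rewrite mul1r.
apply: le_trans (ler_norm_sum _ _ _) _; apply: ler_sum => a _.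
by rewrite normrM (ger0_norm ((hpol x).1 a)) ler_piMl // policy_le1.
Qed.

Definition discounted_reward r gamma i : R^o ^nat :=
  fun h => gamma ^+ h * exp_reward r q pol i h.

Lemma valueE r gamma i :
  value r gamma q pol i = limn (series (discounted_reward r gamma i)).
Proof. by []. Qed.

Lemma discounted_reward_bound r gamma i h : 0 <= gamma ->
  `|discounted_reward r gamma i h| <= geometric (reward_bound r) gamma h.
Proof.
move=> g0; rewrite /discounted_reward /geometric /= normrM normrX (ger0_norm g0).
by rewrite mulrC ler_wpM2r ?exprn_ge0 // exp_reward_bound.
Qed.

Lemma value_cvg r gamma i : 0 <= gamma < 1 ->
  cvgn (series (discounted_reward r gamma i)).
Proof.
move=> /andP[g0 g1]; apply: normed_cvg.
apply: (@series_le_cvg _ _ (geometric (reward_bound r) gamma)).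
- by move=> n; exact: normr_ge0.
- by move=> n; rewrite /geometric /= mulr_ge0 ?exprn_ge0 ?reward_bound_ge0.
- by move=> n; exact: discounted_reward_bound.
- by apply: is_cvg_geometric_series; rewrite ger0_norm.
Qed.

Lemma value_bound r gamma i : 0 <= gamma < 1 ->
  `|value r gamma q pol i| <= reward_bound r / (1 - gamma).
Proof.
move=> /[dup] g01 /andP[g0 g1].
have partial_bound n :
    `|series (discounted_reward r gamma i) n| <= reward_bound r / (1 - gamma).
  apply: le_trans (ler_norm_sum _ _ _) _.
  apply: (@le_trans _ _ (\sum_(0 <= k < n) geometric (reward_bound r) gamma k)).
    by apply: ler_sum => k _; exact: discounted_reward_bound.
  have := geometric_seriesE (reward_bound r) (negbT (lt_eqF g1)).
  move/(congr1 (fun u => u n)); rewrite /series /= => ->.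
  rewrite ler_pM2r ?invr_gt0 ?subr_gt0 //.
  by rewrite ler_piMr ?reward_bound_ge0 // lerBlDr lerDl exprn_ge0.
rewrite valueE ler_norml; apply/andP; split.
  apply: limr_ge; first exact: value_cvg.
  by near=> n; have := partial_bound n; rewrite ler_norml => /andP[].
apply: limr_le; first exact: value_cvg.
by near=> n; have := partial_bound n; rewrite ler_norml => /andP[].
Unshelve. all: by end_near.
Qed.

End Value.

Section MeasurableValue.
Context (R : realType) (S A : finType) (d : measure_display) (T : measurableType d).
Variables (q : T -> trans R S A) (pol : policy R S A).
Hypothesis mq : forall x a y, measurable_fun setT (fun w => q w x a y).
Hypothesis hq : forall w, is_trans (q w).
Hypothesis hpol : is_policy pol.

Lemma measurable_state_dist i h x :
  measurable_fun setT (fun w => state_dist (q w) pol i h x).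
Proof.
elim: h x => [|h IH] x /=; first exact: measurable_cst.
apply: measurable_sum => y; apply: measurable_funM => //.
apply: measurable_sum => a; apply: measurable_funM => //; exact: measurable_cst.
Qed.

Lemma measurable_exp_reward r i h :
  measurable_fun setT (fun w => exp_reward r (q w) pol i h).
Proof.
apply: measurable_sum => x; apply: measurable_funM; last exact: measurable_cst.
exact: measurable_state_dist.
Qed.

Lemma measurable_value r gamma i : 0 <= gamma < 1 ->
  measurable_fun setT (fun w => value r gamma (q w) pol i).
Proof.
move=> g01; apply: (@measurable_fun_cvg _ _ _ _
  (fun n w => series (discounted_reward (q w) pol r gamma i) n : R)
  (fun w => value r gamma (q w) pol i)).
- move=> n; apply: measurable_sum => h; apply: measurable_funM.
    exact: measurable_cst.
  exact: measurable_exp_reward.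
- by move=> w _; apply: (value_cvg (hq w) hpol (r:=r) (i:=i) g01).
Qed.

End MeasurableValue.

Section ValueLocality.
Context (R : realType) (S A : finType).
Variables (q1 q2 : trans R S A) (pol : policy R S A) (good : S -> Prop).
Hypothesis hq1 : is_trans q1.
Hypothesis good_closed : forall x a y, good x -> 0 < q1 x a y -> good y.
Hypothesis q12 : forall x, good x -> forall a y, q1 x a y = q2 x a y.

Lemma state_dist_closed i h x : good i -> state_dist q1 pol i h x != 0 -> good x.
Proof.
move=> gi; elim: h x => [|h IH] x /=.
  by case: (x =P i) => [-> //|_]; rewrite eqxx.
move=> hne; have [//|ngx] := pselect (good x).
move: hne; rewrite big1 ?eqxx // => y _.
have [->|/IH gy] := eqVneq (state_dist q1 pol i h y) 0; first by rewrite mul0r.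
rewrite big1 ?mulr0 // => a _.
have := (hq1 y a).1 x; rewrite le_eqVlt => /orP[/eqP<-|/(good_closed gy)//].
by rewrite mulr0.
Qed.

Lemma eq_state_dist_closed i h x : good i ->
  state_dist q1 pol i h x = state_dist q2 pol i h x.
Proof.
move=> gi; elim: h x => [|h IH] x //=.
apply: eq_bigr => y _; rewrite -IH.
have [->|ne] := eqVneq (state_dist q1 pol i h y) 0; first by rewrite !mul0r.
congr (_ * _); apply: eq_bigr => a _.
by rewrite q12 //; exact: state_dist_closed gi ne.
Qed.

Lemma eq_value_closed r gamma i : good i ->
  value r gamma q1 pol i = value r gamma q2 pol i.
Proof.
move=> gi; rewrite !valueE; congr (lim (series _ @ \oo)).
apply/funext => h; congr (_ * _).
by apply: eq_bigr => x _; rewrite eq_state_dist_closed.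
Qed.

End ValueLocality.

Section NextStateVariance.
Context (R : realType) (S A : finType) (q : trans R S A) (pol : policy R S A) (s : S).
Implicit Types f g : S -> R.

Definition mean_next f := \sum_a \sum_y pol s a * q s a y * f y.

Definition cov_next f g :=
  \sum_a \sum_y pol s a * q s a y * ((f y - mean_next f) * (g y - mean_next g)).

Lemma var_nextE f :
  var_next q pol s f = \sum_a \sum_y pol s a * q s a y * (f y - mean_next f) ^+ 2.
Proof. by []. Qed.

Lemma mean_nextD f g : mean_next (fun y => f y + g y) = mean_next f + mean_next g.
Proof.
rewrite /mean_next -big_split; apply: eq_bigr => a _.
by rewrite -big_split; apply: eq_bigr => y _; rewrite mulrDr.
Qed.

Lemma var_nextD f g : var_next q pol s (fun y => f y + g y) =
  var_next q pol s f + var_next q pol s g + 2 * cov_next f g.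
Proof.
rewrite !var_nextE /cov_next mean_nextD.
move: (mean_next f) (mean_next g) => mf mg.
rewrite mulr_sumr -!big_split; apply: eq_bigr => a _.
by rewrite mulr_sumr -!big_split; apply: eq_bigr => y _ /=; ring.
Qed.

(* Centring [f] is unnecessary because the weights sum to one. *)
Lemma cov_nextE f g : \sum_a \sum_y pol s a * q s a y = 1 ->
  cov_next f g = \sum_a \sum_y pol s a * q s a y * (g y - mean_next g) * f y.
Proof.
move=> sum1.
have centred : \sum_a \sum_y pol s a * q s a y * (g y - mean_next g) = 0.
  transitivity (\sum_a \sum_y pol s a * q s a y * g y -
     (\sum_a \sum_y pol s a * q s a y) * mean_next g).
    rewrite mulr_suml -sumrB; apply: eq_bigr => a _.
    by rewrite mulr_suml -sumrB; apply: eq_bigr => y _; ring.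
  by rewrite sum1 mul1r subrr.
transitivity (\sum_a \sum_y (pol s a * q s a y * (g y - mean_next g) * f y
   - mean_next f * (pol s a * q s a y * (g y - mean_next g)))).
  by apply: eq_bigr => a _; apply: eq_bigr => y _; ring.
under eq_bigr do rewrite sumrB -mulr_sumr.
by rewrite sumrB -mulr_sumr centred mulr0 subr0.
Qed.

Lemma eq_var_next f g :
  (forall a y, pol s a * q s a y != 0 -> f y = g y) ->
  var_next q pol s f = var_next q pol s g.
Proof.
move=> fg; have eq_term (h : S -> R -> R) a y :
    pol s a * q s a y * h y (f y) = pol s a * q s a y * h y (g y).
  by have [->|/fg->] := eqVneq (pol s a * q s a y) 0; rewrite ?mul0r.
rewrite !var_nextE; have -> : mean_next f = mean_next g.
  by apply: eq_bigr => a _; apply: eq_bigr => y _; exact: (eq_term (fun _ x => x)).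
apply: eq_bigr => a _; apply: eq_bigr => y _.
exact: (eq_term (fun _ x => (x - mean_next g) ^+ 2)).
Qed.

Lemma var_next_ge0 f : is_trans q -> is_policy pol -> 0 <= var_next q pol s f.
Proof.
move=> hq hpol; apply: sumr_ge0 => a _; apply: sumr_ge0 => y _.
rewrite mulr_ge0 ?sqr_ge0 //.
by apply: mulr_ge0; [exact: (hpol s).1 | exact: (hq s a).1].
Qed.

Lemma next_weights_sum1 : is_trans q -> is_policy pol ->
  \sum_a \sum_y pol s a * q s a y = 1.
Proof.
move=> hq hpol; under eq_bigr do rewrite -mulr_sumr (hq s _).2 mulr1.
exact: (hpol s).2.
Qed.

End NextStateVariance.

Section RandomTransition.
Context (R : realType) (S A : finType) (d : measure_display)
  (Omega : measurableType d).
Implicit Types (q : Omega -> trans R S A) (pol : policy R S A).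

Lemma bounded_rv_entry q x a y : random_trans q -> bounded_rv (fun w => q w x a y).
Proof.
move=> [hq mq]; split; first exact: mq.
exists 1 => w; rewrite ger0_norm; last exact: (hq w x a).1.
exact: (trans_le1 (hq w) x a y).
Qed.

Lemma bounded_rv_mean_next q pol s (f : Omega -> S -> R) :
  (forall a y, bounded_rv (fun w => q w s a y)) -> (forall y, bounded_rv (f^~ y)) ->
  bounded_rv (fun w => mean_next (q w) pol s (f w)).
Proof.
move=> bq bf; apply: bounded_rv_sum => a; apply: bounded_rv_sum => y.
by apply: bounded_rvM => //; apply: bounded_rvM => //; exact: bounded_rv_cst.
Qed.

Lemma bounded_rv_var_next q pol s (f : Omega -> S -> R) :
  (forall a y, bounded_rv (fun w => q w s a y)) -> (forall y, bounded_rv (f^~ y)) ->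
  bounded_rv (fun w => var_next (q w) pol s (f w)).
Proof.
move=> bq bf; apply: bounded_rv_sum => a; apply: bounded_rv_sum => y.
apply: bounded_rvM; first by apply: bounded_rvM => //; exact: bounded_rv_cst.
have bc : bounded_rv (fun w => f w y - mean_next (q w) pol s (f w)).
  by apply: bounded_rvB => //; exact: bounded_rv_mean_next.
by under eq_fun do rewrite expr2; exact: bounded_rvM.
Qed.

Lemma measurable_forall (I : finType) (F : I -> set Omega) :
  (forall i, measurable (F i)) -> measurable [set w | forall i, F i w].
Proof.
move=> mF; rewrite (_ : [set w | _] = \bigcap_(i in setT) F i).
  by apply: fin_bigcap_measurable => //; exact: finite_finset.
by apply/seteqP; split => w /= h i //; exact: h.
Qed.

End RandomTransition.

Section RowIndependence.
Context (R : realType) (S A : finType) (d : measure_display)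
  (Omega : measurableType d) (P : probability Omega R)
  (p : Omega -> trans R S A) (s : S).
Hypotheses (rp : random_trans p) (ip : indep_rows P p).

Definition row_events : set (set Omega) :=
  [set e | exists2 B : A -> S -> set R, (forall a y, measurable (B a y)) &
    e = [set w | forall a y, B a y (p w s a y)]].

Definition off_row_events : set (set Omega) :=
  [set e | exists2 B : S -> A -> S -> set R, (forall x a y, measurable (B x a y)) &
    e = [set w | forall x a y, x != s -> B x a y (p w x a y)]].

Lemma measurable_entry_preimage x a y (B : set R) : measurable B ->
  measurable [set w | B (p w x a y)].
Proof. by move=> mB; have := rp.2 x a y measurableT _ mB; rewrite setTI. Qed.

Lemma measurable_row_events : row_events `<=` measurable.
Proof.
move=> _ [B mB ->]; apply: measurable_forall => a; apply: measurable_forall => y.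
exact: measurable_entry_preimage.
Qed.

Lemma measurable_off_row_events : off_row_events `<=` measurable.
Proof.
move=> _ [B mB ->]; apply: measurable_forall => x; apply: measurable_forall => a.
apply: measurable_forall => y; have [->|xs] := eqVneq x s.
  rewrite (_ : (fun w => _) = setT) //.
  by apply/seteqP; split => w //= _; rewrite eqxx.
rewrite (_ : (fun w => _) = [set w | B x a y (p w x a y)]).
  exact: measurable_entry_preimage.
by apply/seteqP; split => w /= h //; exact: h.
Qed.

Lemma setI_closed_row_events : setI_closed row_events.
Proof.
move=> _ _ [B1 mB1 ->] [B2 mB2 ->].
exists (fun a y => B1 a y `&` B2 a y) => [a y|]; first exact: measurableI.
apply/seteqP; split => w /=; first by move=> [h1 h2] a y; split; [exact: h1 | exact: h2].
by move=> h; split => a y; case: (h a y).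
Qed.

Lemma setI_closed_off_row_events : setI_closed off_row_events.
Proof.
move=> _ _ [B1 mB1 ->] [B2 mB2 ->].
exists (fun x a y => B1 x a y `&` B2 x a y) => [x a y|]; first exact: measurableI.
apply/seteqP; split => w /=.
  by move=> [h1 h2] x a y xs; split; [exact: h1 | exact: h2].
by move=> h; split => x a y xs; case: (h x a y xs).
Qed.

(* Both events are rectangle events of (A1): [e1] constrains row [s] only and
   [e2] leaves it free, so the product over rows splits as [P e1 * P e2]. *)
Lemma indep_row_off_row e1 e2 : row_events e1 -> off_row_events e2 ->
  indep_events P e1 e2.
Proof.
move=> E1 E2; have me1 := measurable_row_events E1.
have me2 := measurable_off_row_events E2.
move: E1 E2 me1 me2 => [B1 mB1 ->] [B2 mB2 ->] me1 me2.
pose B x := if x == s then B1 else B2 x.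
pose C x := if x == s then fun (_ : A) (_ : S) => [set: R] else B2 x.
have mB x a y : measurable (B x a y) by rewrite /B; case: ifP.
have mC x a y : measurable (C x a y) by rewrite /C; case: ifP.
have eB : [set w | forall x a y, B x a y (p w x a y)] =
    [set w | forall a y, B1 a y (p w s a y)] `&`
    [set w | forall x a y, x != s -> B2 x a y (p w x a y)].
  apply/seteqP; split => w /=.
    move=> h; split => [a y|x a y xs]; first by have := h s a y; rewrite /B eqxx.
    by have := h x a y; rewrite /B (negbTE xs).
  move=> [h1 h2] x a y; rewrite /B; case: eqP => [->|/eqP xs]; first exact: h1.
  exact: h2.
have eC : [set w | forall x a y, C x a y (p w x a y)] =
    [set w | forall x a y, x != s -> B2 x a y (p w x a y)].
  apply/seteqP; split => w /= h x a y.
    by move=> xs; have := h x a y; rewrite /C (negbTE xs).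
  by rewrite /C; case: eqP => [//|/eqP xs]; exact: h.
have row_s_B : [set w | forall a y, B s a y (p w s a y)] =
    [set w | forall a y, B1 a y (p w s a y)] by rewrite /B eqxx.
have row_s_C : [set w | forall a y, C s a y (p w s a y)] = setT.
  by rewrite /C eqxx; apply/seteqP; split.
have := ip mB; have := ip mC; rewrite eB eC => hC hB.
rewrite (bigD1 s) //= row_s_C in hC; rewrite (bigD1 s) //= row_s_B in hB.
rewrite /indep_events (probability_fineE P (measurableI _ _ me1 me2)) hB.
rewrite (probability_fineE P me1) (probability_fineE P me2) hC -EFinM.
rewrite probability_setT /= mul1r; congr (EFin (_ * _)).
by apply: eq_bigr => x xs; rewrite /B /C (negbTE xs).
Qed.

Lemma measurable_row_entry a y :
  measurable_fun [set: g_sigma_algebraType row_events]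
    ((fun w => p w s a y) : g_sigma_algebraType row_events -> R).
Proof.
move=> _ B mB; apply: sub_gen_smallest.
exists (fun a' y' => if (a', y') == (a, y) then B else setT) => [a' y'|].
  by case: ifP.
apply/seteqP; split => w /=; first by move=> [_ hB] a' y'; case: eqP => [[-> ->]|].
by move=> h; split => //; have := h a y; rewrite eqxx.
Qed.

Lemma measurable_off_row_entry x a y : x != s ->
  measurable_fun [set: g_sigma_algebraType off_row_events]
    ((fun w => p w x a y) : g_sigma_algebraType off_row_events -> R).
Proof.
move=> xs _ B mB; apply: sub_gen_smallest.
exists (fun x' a' y' => if (x', a', y') == (x, a, y) then B else setT) => [x' a' y'|].
  by case: ifP.
apply/seteqP; split => w /=.
  by move=> [_ hB] x' a' y' _; case: eqP => [[-> -> ->]|].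
by move=> h; split => //; have := h x a y xs; rewrite eqxx.
Qed.

Lemma expect_mul_row_off_row (f g : Omega -> R) :
  measurable_fun [set: g_sigma_algebraType row_events]
    (f : g_sigma_algebraType row_events -> R) -> bounded f ->
  measurable_fun [set: g_sigma_algebraType off_row_events]
    (g : g_sigma_algebraType off_row_events -> R) -> bounded g ->
  expect P (fun w => f w * g w) = expect P f * expect P g.
Proof.
apply: expect_mul_indep.
- exact: setI_closed_row_events.
- exact: setI_closed_off_row_events.
- exact: measurable_row_events.
- exact: measurable_off_row_events.
- exact: indep_row_off_row.
Qed.

End RowIndependence.

Section FreezeRow.
Context (R : realType) (S A : finType) (s : S).
Implicit Type q : trans R S A.

Definition freeze_row q : trans R S A :=
  fun x a y => if x == s then (y == s)%:R else q x a y.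

Lemma is_trans_freeze_row q : is_trans q -> is_trans (freeze_row q).
Proof.
move=> hq x a; rewrite /freeze_row; case: eqP => _; last exact: hq.
split => [y|]; first by case: (y == s).
by rewrite (bigD1 s) //= eqxx big1 ?addr0 // => y /negbTE ->.
Qed.

Lemma absorbing_next q x a y : is_trans q -> q x a x = 1 -> y != x -> q x a y = 0.
Proof.
move=> /(_ x a) [q0 q1] qxx yx.
have others0 : \sum_(z | z != x) q x a z = 0.
  by apply: (@addrI _ 1); rewrite addr0 -{2}q1 [RHS](bigD1 x) //= qxx.
exact: (psumr_eq0P (fun z _ => q0 z) others0).
Qed.

Lemma freeze_absorbing q : is_trans q -> (forall a, q s a s = 1) -> freeze_row q = q.
Proof.
move=> hq qss; apply/funext => x; apply/funext => a; apply/funext => y.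
rewrite /freeze_row; case: eqP => [->|//]; have [->|ys] := eqVneq y s.
  by rewrite qss.
by rewrite absorbing_next.
Qed.

End FreezeRow.

Section FrozenRowValue.
Context (R : realType) (S A : finType) (d : measure_display)
  (Omega : measurableType d) (P : probability Omega R)
  (r : S -> A -> R) (gamma : R) (p : Omega -> trans R S A)
  (pol : policy R S A) (s : S).
Hypotheses (g01 : 0 <= gamma < 1) (rp : random_trans p) (ip : indep_rows P p).
Hypotheses (ac : acyclic p) (hpol : is_policy pol).

Local Notation T1 := (g_sigma_algebraType (row_events p s)).
Local Notation T2 := (g_sigma_algebraType (off_row_events p s)).

Definition frozen_value w y := value r gamma (freeze_row s (p w)) pol y.
Definition frozen_mean y := expect P (frozen_value^~ y).
Definition frozen_dev w y := frozen_value w y - frozen_mean y.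

(* By acyclicity, once a successor of [s] is reached row [s] is never used
   again, unless [s] is absorbing, in which case freezing it changes nothing. *)
Lemma value_freeze_row y : (exists w a, pol s a * p w s a y != 0) ->
  forall w, value r gamma (p w) pol y = frozen_value w y.
Proof.
move=> [w0 [a0 nz]] w; have [rank hrank] := ac.
have hp w' := rp.1 w'.
have [s_abs|s_nabs] := pselect (forall w' a', p w' s a' s = 1).
  by rewrite /frozen_value freeze_absorbing.
have pos : 0 < p w0 s a0 y.
  by rewrite lt_def (hp w0 s a0).1 andbT; apply: contraNneq nz => ->; rewrite mulr0.
have rank_y : (rank s < rank y)%N by case: (hrank _ _ _ _ pos).
pose good x := (rank s < rank x)%N \/ (forall w' a', p w' x a' x = 1).
apply: (@eq_value_closed _ _ _ _ _ _ good) (or_introl rank_y) => //.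
  move=> x a z gx pxz; have [x_abs|x_nabs] := pselect (forall w' a', p w' x a' x = 1).
    have [->//|zx] := eqVneq z x.
    by move: pxz; rewrite (absorbing_next (hp w)) ?x_abs // ltxx.
  case: (hrank _ _ _ _ pxz) => // rank_xz; left.
  by case: gx => // rank_sx; exact: ltn_trans rank_sx rank_xz.
move=> x gx a z; rewrite /freeze_row; case: eqP => // xs.
by case: gx; rewrite xs ?ltnn.
Qed.

Lemma var_next_value_freeze w :
  var_next (p w) pol s (value r gamma (p w) pol) = var_next (p w) pol s (frozen_value w).
Proof. by apply: eq_var_next => a y nz; apply: value_freeze_row; exists w, a. Qed.

Lemma var_next_mean_freeze w :
  var_next (p w) pol s (fun y => expect P (fun w' => value r gamma (p w') pol y)) =
  var_next (p w) pol s frozen_mean.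
Proof.
apply: eq_var_next => a y nz; congr expect; apply/funext => w'.
by apply: value_freeze_row; exists w, a.
Qed.

Lemma measurable_frozen_value y :
  measurable_fun [set: T2] ((frozen_value^~ y) : T2 -> R).
Proof.
apply: measurable_value => // [x a z|w]; last exact/is_trans_freeze_row/rp.1.
rewrite /freeze_row; case: eqP => [_|/eqP xs]; first exact: measurable_cst.
exact: measurable_off_row_entry.
Qed.

Lemma bounded_rv_frozen_value y : bounded_rv (frozen_value^~ y).
Proof.
split.
  exact: measurable_fun_sigma (measurable_off_row_events rp) (measurable_frozen_value y).
exists (reward_bound r / (1 - gamma)) => w.
exact/value_bound/g01/hpol/is_trans_freeze_row/rp.1.
Qed.

Lemma bounded_rv_frozen_dev y : bounded_rv (frozen_dev^~ y).
Proof.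
by apply: bounded_rvB; [exact: bounded_rv_frozen_value | exact: bounded_rv_cst].
Qed.

Lemma expect_frozen_dev y : expect P (frozen_dev^~ y) = 0.
Proof.
rewrite expectB ?expect_cst ?subrr //; last exact: bounded_rv_cst.
exact: bounded_rv_frozen_value.
Qed.

Definition frozen_weight a y w :=
  pol s a * p w s a y * (frozen_mean y - mean_next (p w) pol s frozen_mean).

Definition frozen_cross w := \sum_a \sum_y frozen_weight a y w * frozen_dev w y.

Lemma var_next_frozen_gap w :
  var_next (p w) pol s (frozen_value w) - var_next (p w) pol s frozen_mean =
  var_next (p w) pol s (frozen_dev w) + 2 * frozen_cross w.
Proof.
have -> : frozen_value w = fun y => frozen_dev w y + frozen_mean y.
  by apply/funext => y; rewrite subrK.
rewrite var_nextD cov_nextE; last exact: next_weights_sum1 (rp.1 w) hpol.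
by rewrite /frozen_cross /frozen_weight; ring.
Qed.

Lemma measurable_frozen_weight a y :
  measurable_fun [set: T1] (frozen_weight a y : T1 -> R).
Proof.
have entry_row b z : measurable_fun [set: T1] ((fun w => pol s b * p w s b z) : T1 -> R).
  by apply: measurable_funM; [exact: measurable_cst | exact: measurable_row_entry].
apply: measurable_funM => //; apply: measurable_funB; first exact: measurable_cst.
apply: measurable_sum => b; apply: measurable_sum => z.
by apply: measurable_funM => //; exact: measurable_cst.
Qed.

Lemma bounded_rv_frozen_weight a y : bounded_rv (frozen_weight a y).
Proof.
have entry_rv x b z := bounded_rv_entry x b z rp.
apply: bounded_rvM; first by apply: bounded_rvM => //; exact: bounded_rv_cst.
apply: bounded_rvB; first exact: bounded_rv_cst.
by apply: bounded_rv_mean_next => // z; exact: bounded_rv_cst.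
Qed.

Lemma bounded_rv_frozen_cross : bounded_rv frozen_cross.
Proof.
apply: bounded_rv_sum => a; apply: bounded_rv_sum => y.
exact: bounded_rvM (bounded_rv_frozen_weight a y) (bounded_rv_frozen_dev y).
Qed.

Lemma expect_frozen_cross : expect P frozen_cross = 0.
Proof.
have term_rv a y := bounded_rvM (bounded_rv_frozen_weight a y) (bounded_rv_frozen_dev y).
rewrite /frozen_cross expect_sum => [|a]; last first.
  by apply: bounded_rv_sum => y; exact: term_rv.
rewrite big1 // => a _; rewrite expect_sum => [|y]; last exact: term_rv.
rewrite big1 // => y _.
have dev_meas : measurable_fun [set: T2] ((frozen_dev^~ y) : T2 -> R).
  by apply: measurable_funB; [exact: measurable_frozen_value | exact: measurable_cst].
rewrite (expect_mul_row_off_row rp ip (measurable_frozen_weight a y)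
  (bounded_rv_frozen_weight a y).2 dev_meas (bounded_rv_frozen_dev y).2).
by rewrite expect_frozen_dev mulr0.
Qed.

End FrozenRowValue.

Theorem lemma7 (R : realType) (S A : finType) (d : measure_display)
  (Omega : measurableType d) (P : probability Omega R)
  (r : S -> A -> R) (gamma : R) (p : Omega -> trans R S A)
  (pol : policy R S A) (s : S) :
  0 <= gamma < 1 ->
  random_trans p -> indep_rows P p -> acyclic p ->
  is_policy pol ->
  let Vbar := fun s' => expect P (fun w => value r gamma (p w) pol s') in
  (0 <= \int[P]_w (var_next (p w) pol s (value r gamma (p w) pol)
                    - var_next (p w) pol s Vbar)%:E)%E.
Proof.
move=> g01 rp ip ac hpol; cbv zeta.
under eq_integral => w _ do rewrite (var_next_value_freeze r gamma pol s rp ac)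
  (var_next_mean_freeze P r gamma pol s rp ac) (var_next_frozen_gap P r gamma s rp hpol).
have entry_rv a y := bounded_rv_entry s a y rp.
have dev_rv := bounded_rv_frozen_dev P r s g01 rp hpol.
have dev_var_rv := bounded_rv_var_next pol entry_rv dev_rv.
have cross_rv := bounded_rv_frozen_cross P r s g01 rp hpol.
have cross2_rv := bounded_rvM (bounded_rv_cst 2) cross_rv.
rewrite (integral_expect P (bounded_rvD dev_var_rv cross2_rv)) expectD // expectZ //.
rewrite (expect_frozen_cross r s g01 rp ip hpol) mulr0 addr0 lee_fin.
by apply: expect_ge0 => w; exact: var_next_ge0 (rp.1 w) hpol.
Qed.
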